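(* For every integer $L\geq 0$, \[ \sum_{j=-\infty}^{\infty} (-1)^j q^{j^2} \left(\frac{j+1}{3}\right) {2L+1 \brack L-j}_{q^2} = \frac{(q^3;q^6)_L}{(q;q^2)_L}. \]
   Context: For a variable $a$ and integer $n\ge 0$, $(a;q)_n=(1-a)(1-aq)\cdots(1-aq^{n-1})$ (with $(a;q)_0=1$). The $q$-binomial coefficient is ${A \brack B}_q=\frac{(q;q)_A}{(q;q)_B(q;q)_{A-B}}$ if $0\le B\le A$ are integers, and $0$ otherwise; ${A\brack B}_{q^2}$ is the same with $q$ replaced by $q^2$. $\left(\frac{j}{3}\right)$ is the Legendre symbol modulo 3: it equals $1$ if $j\equiv 1 \pmod 3$, $-1$ if $j\equiv -1\pmod 3$, and $0$ if $3\mid j$. *)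

From mathcomp Require Import all_boot all_order all_algebra.
Set Implicit Arguments. Unset Strict Implicit. Unset Printing Implicit Defensive.
Import Order.TTheory GRing.Theory Num.Theory.
Local Open Scope ring_scope.

Definition qpoch (R : nzRingType) (a q : R) (n : nat) : R :=
  \prod_(i < n) (1 - a * q ^+ i).

Definition qbinom (F : fieldType) (q : F) (A B : int) : F :=
  if (0 <= B) && (B <= A) then
    qpoch q q `|A|%N / (qpoch q q `|B|%N * qpoch q q `|A - B|%N)
  else 0.

Definition leg3 (j : int) : int :=
  if (j %% 3)%Z == 1 then 1 else if (j %% 3)%Z == 2 then -1 else 0.

Definition term25 (F : fieldType) (q : F) (L : nat) (j : int) : F :=
  (-1) ^+ `|j|%N * q ^+ (`|j| ^ 2)%N * (leg3 (j + 1))%:~R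
    * qbinom (q ^+ 2) (2 * L + 1)%N%:Z (L%:Z - j).

From mathcomp Require Import all_boot all_order all_algebra.
From mathcomp Require Import zify ring.
Import GRing.Theory.
Set Implicit Arguments.
Unset Strict Implicit.
Unset Printing Implicit Defensive.
Local Open Scope ring_scope.

(* Let g_L(j) = (-1)^j q^(j^2) [2L+1, L-j]_(q^2).  Applying the two q-Pascal
   rules twice gives a three-term recurrence in L,
     g_(L+1)(j) = (1 + q^(4L+4)) g_L(j) - q^(2L+1) g_L(j-1) - q^(2L+3) g_L(j+1),
   and summing it against a weight e moves the shifts j -/+ 1 onto e.  The
   values of (j/3) at three consecutive integers add up to 0, so the weights
   ((j+1)/3) and ((j+2)/3) span a shift-invariant space: the two sums A_L, B_L
   of g_L against them satisfy a closed linear recursion.  Its solution is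
   A_L = R_L, B_L = -(1 + q^(2L+1)) R_L, where R_L is the right-hand side,
   because R_(L+1) = (1 + a + a^2) R_L with a = q^(2L+1). *)

Lemma qpoch0 (R : nzRingType) (a q : R) : qpoch a q 0 = 1.
Proof. by rewrite /qpoch big_ord0. Qed.

Lemma qpochS (R : nzRingType) (a q : R) n :
  qpoch a q n.+1 = qpoch a q n * (1 - a * q ^+ n).
Proof. by rewrite /qpoch big_ord_recr. Qed.

Section QBinomial.
Variables (F : fieldType) (p : F).
Hypothesis p_not_unity : forall m, (0 < m)%N -> p ^+ m != 1.

Lemma subr1X_neq0 m : (0 < m)%N -> 1 - p ^+ m != 0.
Proof. by move=> m_gt0; rewrite subr_eq0 eq_sym p_not_unity. Qed.

Lemma qpoch_neq0 n : qpoch p p n != 0.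
Proof. by apply/prodf_neq0 => i _; rewrite -exprS subr1X_neq0. Qed.

Lemma qbinom_eq0 (n : nat) (B : int) : (B < 0) || (n%:Z < B) -> qbinom p n B = 0.
Proof. by move=> hB; rewrite /qbinom ifF //; apply/negbTE; lia. Qed.

Lemma qbinom_nat (n k : nat) : (k <= n)%N ->
  qbinom p n k = qpoch p p n / (qpoch p p k * qpoch p p (n - k)).
Proof.
move=> kn; rewrite /qbinom ifT; last lia.
by congr (_ / (_ * qpoch _ _ _)); lia.
Qed.

Lemma qbinom0 (n : nat) : qbinom p n 0%N = 1.
Proof. by rewrite qbinom_nat // qpoch0 mul1r subn0 divff // qpoch_neq0. Qed.

Lemma qbinomnn (n : nat) : qbinom p n n = 1.
Proof. by rewrite qbinom_nat // subnn qpoch0 mulr1 divff // qpoch_neq0. Qed.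

Lemma qbinom_pascal_nat (n k : nat) : (k < n)%N ->
  qbinom p n.+1 k.+1 = qbinom p n k + p ^+ k.+1 * qbinom p n k.+1 /\
  qbinom p n.+1 k.+1 = p ^+ (n - k) * qbinom p n k + qbinom p n k.+1.
Proof.
move=> kn; rewrite !qbinom_nat ?subSS; try lia.
have := subnSK kn; set m := (n - k.+1)%N => <-.
rewrite !qpochS -!exprS.
have -> : p ^+ n.+1 = p ^+ k.+1 * p ^+ m.+1.
  by rewrite -exprD; congr (_ ^+ _); lia.
by split; field; rewrite !qpoch_neq0 ?subr1X_neq0.
Qed.

Lemma qbinom_pascal (n : nat) (B : int) :
  qbinom p n.+1 B = qbinom p n (B - 1) + p ^+ `|B| * qbinom p n B /\
  qbinom p n.+1 B = p ^+ `|n.+1%:Z - B| * qbinom p n (B - 1) + qbinom p n B.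
Proof.
case: B => [[|k]|k]; last by rewrite !qbinom_eq0 ?mulr0 ?addr0 //; lia.
  by rewrite !qbinom0 qbinom_eq0 //= mulr0 !add0r mulr1 expr0.
have -> : k.+1%:Z - 1 = k by lia.
case: (ltngtP k n) => [kn | nk | ->].
- have -> : (`|n.+1%:Z - k.+1%:Z| = n - k)%N by lia.
  exact: qbinom_pascal_nat.
- by rewrite !qbinom_eq0 ?mulr0 ?addr0 //; lia.
- rewrite !qbinomnn qbinom_eq0; last lia.
  have -> : (`|n.+1%:Z - n.+1%:Z| = 0)%N by lia.
  by split; rewrite ?mulr0 ?mulr1 addr0.
Qed.

Lemma qbinomSS (n : nat) (B : int) :
  qbinom p n.+2 B = p ^+ `|n.+2%:Z - B| * qbinom p n (B - 2)
    + (1 + p ^+ n.+1) * qbinom p n (B - 1) + p ^+ `|B| * qbinom p n B.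
Proof.
rewrite (qbinom_pascal n.+1 B).1 !(qbinom_pascal n _).2.
have -> : B - 1 - 1 = B - 2 by lia.
have -> : n.+1%:Z - (B - 1) = n.+2%:Z - B by lia.
have middle : p ^+ `|B| * (p ^+ `|n.+1%:Z - B| * qbinom p n (B - 1))
              = p ^+ n.+1 * qbinom p n (B - 1).
  have [inside | outside] := boolP ((0 < B) && (B <= n.+1%:Z)).
    by rewrite mulrA -exprD; congr (_ ^+ _ * _); lia.
  by rewrite qbinom_eq0 ?mulr0 //; lia.
by rewrite mulrDr middle; ring.
Qed.
End QBinomial.

Definition altsq (R : nzRingType) (q : R) (j : int) : R :=
  (-1) ^+ `|j| * q ^+ (`|j| ^ 2).

Lemma altsqS (R : nzRingType) (q : R) (j : int) (a b : nat) :
  a%:Z + 2 * j + 1 = b%:Z -> altsq q (j + 1) * q ^+ a = - (altsq q j * q ^+ b).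
Proof.
move=> ab; have sign : (-1) ^+ `|j + 1| = - (-1) ^+ `|j| :> R.
  have [->|->] : (absz (j + 1)%R = (absz j).+1 \/ absz j = (absz (j + 1)%R).+1)%N.
  - by lia.
  - by rewrite exprS mulN1r.
  - by rewrite exprS mulN1r opprK.
rewrite /altsq sign !mulNr -!mulrA -!exprD.
by congr (- (_ * q ^+ _)); nia.
Qed.

Section BilateralSum.
Variable V : nmodType.

Definition bisum (K : nat) (f : int -> V) : V :=
  \sum_(i < (2 * K + 1)%N) f (i%:Z - K%:Z).

Lemma bisum_shift K (f : int -> V) :
  f (- K%:Z) = 0 -> f (K%:Z + 1) = 0 -> bisum K (fun j => f (j + 1)) = bisum K f.
Proof.
move=> f_left f_right.
have left_end : \sum_(i < (2 * K + 1).+1) f (i%:Z - K%:Z)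
                = f (- K%:Z) + bisum K (fun j => f (j + 1)).
  rewrite big_ord_recl; congr (f _ + _); first by rewrite /=; lia.
  by apply: eq_bigr => i _; congr f; rewrite lift0; lia.
have right_end : \sum_(i < (2 * K + 1).+1) f (i%:Z - K%:Z)
                 = bisum K f + f (K%:Z + 1).
  by rewrite big_ord_recr; congr (_ + f _); rewrite /=; lia.
by move: left_end; rewrite right_end f_left f_right add0r addr0.
Qed.

Lemma bisum_widen K K' (f : int -> V) :
  (forall j, (K < `|j|)%N -> f j = 0) -> (K <= K')%N -> bisum K' f = bisum K f.
Proof.
move=> f_supp; elim: K' => [|K' IH]; first by rewrite leqn0 => /eqP ->.
rewrite leq_eqVlt ltnS => /predU1P [-> // | KK'].
rewrite -IH // /bisum (_ : (2 * K'.+1 + 1 = (2 * K' + 1).+2)%N); last lia.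
rewrite big_ord_recl big_ord_recr /= /bump /= !f_supp ?add0r ?addr0; try lia.
by apply: eq_bigr => i _; congr f; lia.
Qed.

End BilateralSum.

Lemma bisum_comb (R : comPzRingType) K (f u v e : int -> R) (a b : R) :
  (forall j, e j = a * u j + b * v j) ->
  bisum K (fun j => f j * e j)
  = a * bisum K (fun j => f j * u j) + b * bisum K (fun j => f j * v j).
Proof.
move=> eE; rewrite /bisum !mulr_sumr -big_split.
by apply: eq_bigr => i _; rewrite eE /=; ring.
Qed.

Lemma leg3_period_sum (j : int) : leg3 j + leg3 (j + 1) + leg3 (j + 2) = 0.
Proof. by rewrite /leg3; repeat case: eqP => ?; lia. Qed.

Section GaussTerm.
Variables (F : fieldType) (q : F).
Hypothesis q_not_unity : forall n : nat, (0 < n)%N -> q ^+ n != 1.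

Lemma sqr_not_unity m : (0 < m)%N -> (q ^+ 2) ^+ m != 1.
Proof. by move=> m_gt0; rewrite -exprM q_not_unity // muln_gt0. Qed.

Definition gterm (L : nat) (j : int) : F :=
  altsq q j * qbinom (q ^+ 2) (2 * L + 1)%N (L%:Z - j).

Lemma gterm_eq0 L j : (L.+1 < `|j|)%N -> gterm L j = 0.
Proof. by move=> Lj; rewrite /gterm qbinom_eq0 ?mulr0 //; lia. Qed.

Lemma gtermS L j :
  gterm L.+1 j = (1 + q ^+ (4 * L + 4)) * gterm L j
    - q ^+ (2 * L + 1) * gterm L (j - 1) - q ^+ (2 * L + 3) * gterm L (j + 1).
Proof.
rewrite /gterm (_ : (2 * L.+1 + 1 = (2 * L + 1).+2)%N); last lia.
rewrite (_ : L%:Z - (j - 1) = L.+1%:Z - j); last lia.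
rewrite (_ : L%:Z - j = L.+1%:Z - j - 1); last lia.
rewrite (_ : L%:Z - (j + 1) = L.+1%:Z - j - 2); last lia.
rewrite (qbinomSS sqr_not_unity); move eB: (L.+1%:Z - j) => B.
set n := (2 * L + 1)%N.
have term_succ : altsq q j * ((q ^+ 2) ^+ `|n.+2%:Z - B| * qbinom (q ^+ 2) n (B - 2))
    = - (q ^+ (2 * L + 3) * (altsq q (j + 1) * qbinom (q ^+ 2) n (B - 2))).
  have [j_big | j_small] := boolP (- L%:Z - 2 <= j).
    rewrite -exprM mulrA -[altsq q j * _]opprK -(@altsqS _ q j (2 * L + 3) _); first ring.
    lia.
  by rewrite qbinom_eq0 ?mulr0 ?oppr0 //; lia.
have term_pred : altsq q j * ((q ^+ 2) ^+ `|B| * qbinom (q ^+ 2) n B)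
    = - (q ^+ (2 * L + 1) * (altsq q (j - 1) * qbinom (q ^+ 2) n B)).
  have [j_small | j_big] := boolP (j <= L.+1%:Z).
    rewrite -exprM mulrA -{1}(subrK 1 j) (@altsqS _ q (j - 1) _ (2 * L + 1)); first ring.
    lia.
  by rewrite qbinom_eq0 ?mulr0 ?oppr0 //; lia.
rewrite !mulrDr term_succ term_pred -exprM.
have -> : (2 * (2 * L + 1).+1 = 4 * L + 4)%N by lia.
ring.
Qed.

Lemma bisum_gtermS L K (e : int -> F) : (L.+1 < K)%N ->
  bisum K (fun j => gterm L.+1 j * e j)
  = (1 + q ^+ (4 * L + 4)) * bisum K (fun j => gterm L j * e j)
    - q ^+ (2 * L + 1) * bisum K (fun j => gterm L j * e (j + 1))
    - q ^+ (2 * L + 3) * bisum K (fun j => gterm L j * e (j - 1)).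
Proof.
move=> LK.
have shift_pred : bisum K (fun j => gterm L j * e (j + 1))
                  = bisum K (fun j => gterm L (j - 1) * e j).
  rewrite -[RHS]bisum_shift; first by apply: eq_bigr => i _; rewrite addrK.
    by rewrite gterm_eq0 ?mul0r //; lia.
  by rewrite gterm_eq0 ?mul0r //; lia.
have shift_succ : bisum K (fun j => gterm L j * e (j - 1))
                  = bisum K (fun j => gterm L (j + 1) * e j).
  rewrite -[LHS]bisum_shift; first by apply: eq_bigr => i _; rewrite addrK.
    by rewrite gterm_eq0 ?mul0r //; lia.
  by rewrite gterm_eq0 ?mul0r //; lia.
rewrite shift_pred shift_succ /bisum !mulr_sumr -!sumrB.
by apply: eq_bigr => i _; rewrite gtermS; ring.
Qed.

Lemma bisum_gterm0 K (e : int -> F) : (0 < K)%N ->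
  bisum K (fun j => gterm 0 j * e j) = e 0 - q * e (-1).
Proof.
have gm1 : gterm 0 (-1) = - q.
  by rewrite /gterm /altsq (qbinomnn sqr_not_unity 1) expr1 mulN1r mulr1.
have g0 : gterm 0 0 = 1.
  by rewrite /gterm /altsq (qbinom0 sqr_not_unity) !mulr1.
have g1 : gterm 0 1 = 0 by rewrite /gterm qbinom_eq0 ?mulr0.
move=> K_gt0; rewrite (@bisum_widen _ 1) //; last first.
  by move=> j j_big; rewrite gterm_eq0 ?mul0r.
rewrite /bisum !big_ord_recr big_ord0 /= gm1 g0 g1.
by rewrite add0r mul1r mul0r addr0 addrC mulNr.
Qed.

Definition rhs25 (L : nat) : F := qpoch (q ^+ 3) (q ^+ 6) L / qpoch q (q ^+ 2) L.

Lemma rhs25S L :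
  rhs25 L.+1 = rhs25 L * (1 + q ^+ (2 * L + 1) + q ^+ (2 * L + 1) ^+ 2).
Proof.
rewrite /rhs25 !qpochS invfM mulrACA; congr (_ * _).
have -> : q ^+ 3 * (q ^+ 6) ^+ L = q ^+ (2 * L + 1) ^+ 3.
  by rewrite -!exprM -exprD; congr (_ ^+ _); lia.
have -> : q * (q ^+ 2) ^+ L = q ^+ (2 * L + 1).
  by rewrite -exprM -exprS; congr (_ ^+ _); lia.
have : 1 - q ^+ (2 * L + 1) != 0 by rewrite subr1X_neq0 // addn1.
by move=> ?; field.
Qed.

Lemma bisum_gterm_leg3 L K : (L < K)%N ->
  bisum K (fun j => gterm L j * (leg3 (j + 1))%:~R) = rhs25 L /\
  bisum K (fun j => gterm L j * (leg3 (j + 2))%:~R) = - (1 + q ^+ (2 * L + 1)) * rhs25 L.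
Proof.
elim: L K => [|L IH] K LK.
  rewrite !bisum_gterm0 // /rhs25 !qpoch0 divr1.
  (* matching up to conversion, the first rewrite also catches leg3 (-1 + 2) *)
  rewrite (_ : leg3 (0 + 1) = 1) // (_ : leg3 (-1 + 1) = 0) //.
  rewrite (_ : leg3 (0 + 2) = -1) //.
  by split; rewrite /=; ring.
have chi_sum j : (leg3 j)%:~R + (leg3 (j + 1))%:~R + (leg3 (j + 2))%:~R = 0 :> F.
  by rewrite -!intrD leg3_period_sum.
have [A_L B_L] := IH K (ltnW LK).
rewrite !bisum_gtermS //.
set A := bisum K (fun j => gterm L j * (leg3 (j + 1))%:~R) in A_L *.
set B := bisum K (fun j => gterm L j * (leg3 (j + 2))%:~R) in B_L *.
have A_succ : bisum K (fun j => gterm L j * (leg3 (j + 1 + 1))%:~R) = B.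
  by apply: eq_bigr => i _; rewrite -addrA.
have A_pred : bisum K (fun j => gterm L j * (leg3 (j - 1 + 1))%:~R) = -1 * A + -1 * B.
  by apply: bisum_comb => j; rewrite subrK -[LHS]subr0 -(chi_sum j); ring.
have B_succ : bisum K (fun j => gterm L j * (leg3 (j + 1 + 2))%:~R) = -1 * A + -1 * B.
  apply: bisum_comb => j; have := chi_sum (j + 1).
  rewrite (_ : j + 1 + 1 = j + 2); last lia.
  by move=> h; rewrite -[LHS]subr0 -h; ring.
have B_pred : bisum K (fun j => gterm L j * (leg3 (j - 1 + 2))%:~R) = A.
  by apply: eq_bigr => i _; rewrite -addrA.
rewrite A_succ A_pred B_succ B_pred A_L B_L rhs25S.
set a := q ^+ (2 * L + 1).
have -> : q ^+ (4 * L + 4) = a ^+ 2 * q ^+ 2 by rewrite -!exprM -exprD; congr (_ ^+ _); lia.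
have -> : q ^+ (2 * L + 3) = a * q ^+ 2 by rewrite -exprD; congr (_ ^+ _); lia.
have -> : q ^+ (2 * L.+1 + 1) = a * q ^+ 2 by rewrite -exprD; congr (_ ^+ _); lia.
by split; ring.
Qed.

End GaussTerm.

Theorem theorem2p5 (F : fieldType) (q : F)
    (hq : forall n : nat, (0 < n)%N -> q ^+ n != 1)
    (L N : nat) (hN : (L < N)%N) :
  \sum_(i < (2 * N + 1)%N) term25 q L (i%:Z - N%:Z)
  = qpoch (q ^+ 3) (q ^+ 6) L / qpoch q (q ^+ 2) L.
Proof.
have <- : bisum N (fun j => gterm q L j * (leg3 (j + 1))%:~R)
          = \sum_(i < (2 * N + 1)%N) term25 q L (i%:Z - N%:Z).
  by apply: eq_bigr => i _; rewrite /term25 mulrAC.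
exact: (bisum_gterm_leg3 hq hN).1.
Qed.
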